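(* Let $\varphi\colon (A,m,K)\to (B,n,L)$ and $\psi\colon B\to C$ be local homomorphisms of noetherian local rings. Let $\psi_{mB}\colon B/mB\to C/mC$ be the induced map and $\pi_{mB}\colon B\to B/mB$, $\pi_{mC}\colon C\to C/mC$ the canonical surjections. Then $$\operatorname{rd}(\psi\circ\varphi)=\operatorname{rd}(\varphi)+\operatorname{rd}(\psi)-\operatorname{rd}(\psi_{mB})=\operatorname{rd}(\varphi)+(\operatorname{rd}(\pi_{mB})-\operatorname{rd}(\pi_{mC})).$$ Consequently, $\operatorname{rd}(\varphi)\leq\operatorname{rd}(\psi\circ\varphi)\leq\operatorname{rd}(\varphi)+\operatorname{rd}(\psi)$.
   Context: All rings are commutative and noetherian with identity. A local homomorphism $\varphi\colon (A,m,K)\to(B,n,L)$ satisfies $\varphi(m)\subseteq n$. The regularity defect $\operatorname{rd}(\varphi)$ is the $L$-dimension of the kernel of the natural $L$-linear map $m/m^2\otimes_K L\to n/n^2$, $\bar x\otimes\bar b\mapsto \overline{\varphi(x)b}$. *)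

From HB Require Import structures.
From mathcomp Require Import all_boot all_order all_algebra.
From Stdlib Require Import ClassicalEpsilon.
Set Implicit Arguments. Unset Strict Implicit. Unset Printing Implicit Defensive.
Import Order.TTheory GRing.Theory Num.Theory.
Local Open Scope ring_scope.

Definition is_ideal (R : comUnitRingType) (I : R -> Prop) : Prop :=
  [/\ I 0, (forall x y, I x -> I y -> I (x + y)) & (forall r x, I x -> I (r * x))].

Definition in_span (R : comUnitRingType) (n : nat) (g : 'I_n -> R) (x : R) : Prop :=
  exists c : 'I_n -> R, x = \sum_(i < n) c i * g i.

Definition noetherian (R : comUnitRingType) : Prop :=
  forall I : R -> Prop, is_ideal I ->
    exists n (g : 'I_n -> R), forall x, I x <-> in_span g x.

Definition maxI (R : comUnitRingType) : R -> Prop := fun x => x \isn't a GRing.unit.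

(* local ring: the non-units form an ideal (1 <> 0 holds in a nzRing) *)
Definition is_local (R : comUnitRingType) : Prop := is_ideal (@maxI R).

Definition noeth_local (R : comUnitRingType) : Prop := noetherian R /\ is_local R.

Definition local_hom (A B : comUnitRingType) (f : {rmorphism A -> B}) : Prop :=
  forall x, maxI x -> maxI (f x).

Definition zeroI (R : comUnitRingType) : R -> Prop := fun x => x = 0.

Definition sqI (R : comUnitRingType) (I : R -> Prop) (x : R) : Prop :=
  exists n (a b : 'I_n -> R), (forall i, I (a i) /\ I (b i)) /\
    x = \sum_(i < n) a i * b i.

Definition addI (R : comUnitRingType) (I J : R -> Prop) (x : R) : Prop :=
  exists a b, I a /\ J b /\ x = a + b.

Definition extI (A B : comUnitRingType) (f : A -> B) (I : A -> Prop) (y : B) : Prop :=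
  exists n (a : 'I_n -> A) (c : 'I_n -> B), (forall i, I (a i)) /\
    y = \sum_(i < n) c i * f (a i).

(* the largest d with P d (0 if it does not exist; it does in the cases used) *)
Definition maxdim (P : nat -> Prop) : nat :=
  epsilon (inhabits 0%N) (fun d => P d /\ forall e, P e -> (e <= d)%N).

(* Consider f : A -> B inducing a local homomorphism fbar : A/I -> B/J
   (I ⊆ m_A, J ⊆ m_B ideals, f(I) ⊆ J).  Then A/I has maximal ideal m/I,
   cotangent space (m/I)/(m/I)^2 = m/(m^2 + I) over K = A/m, and likewise
   B/J has cotangent space n/(n^2 + J) over L = B/n. *)

(* dim_K of m/(m^2+I) : maximal number of K-linearly independent elements *)
Definition cotdim (A : comUnitRingType) (I : A -> Prop) : nat :=
  maxdim (fun r => exists x : 'I_r -> A, (forall i, maxI (x i)) /\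
    forall a : 'I_r -> A,
      addI (sqI (@maxI A)) I (\sum_(i < r) a i * x i) -> forall i, maxI (a i)).

(* dim_L of the L-span of the image of m/(m^2+I) in n/(n^2+J), i.e. the
   dimension of the image of the L-linear map  m/(m^2+I) (x)_K L -> n/(n^2+J) *)
Definition imdim (A B : comUnitRingType) (f : A -> B)
    (I : A -> Prop) (J : B -> Prop) : nat :=
  maxdim (fun s => exists x : 'I_s -> A, (forall i, maxI (x i)) /\
    forall b : 'I_s -> B,
      addI (sqI (@maxI B)) J (\sum_(i < s) b i * f (x i)) -> forall i, maxI (b i)).

(* regularity defect of the induced map fbar : A/I -> B/J:
   dim_L ker(m/m^2 (x)_K L -> n/n^2) = dim_L(m/m^2 (x)_K L) - dim_L(image)
   = dim_K(m/m^2) - dim_L(image)   (rank-nullity). *)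
Definition rd_gen (A B : comUnitRingType) (f : A -> B)
    (I : A -> Prop) (J : B -> Prop) : nat :=
  (cotdim I - imdim f I J)%N.

Definition rd (A B : comUnitRingType) (f : A -> B) : nat :=
  rd_gen f (@zeroI A) (@zeroI B).

From HB Require Import structures.
From mathcomp Require Import all_boot all_order all_algebra.
From mathcomp Require Import ring zify.
From Stdlib Require Import Classical ClassicalEpsilon.
Import GRing.Theory.
Local Open Scope ring_scope.
Set Implicit Arguments. Unset Strict Implicit.

(* Every defect in the statement is a difference of ranks [image_rank f N]: the
   dimension over the residue field of the span of the image of the maximal ideal
   under [f] in [maxI R / N], for an ideal [N] between the square of the maximal
   ideal and the maximal ideal itself.  Thus rd(phi) = r(id_A, m_A^2) - r(phi, n^2)
   and rd(psi_mB) = r(id_B, n^2 + mB) - r(psi, n_C^2 + mC).  Rank-nullity for the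
   projections n/n^2 -> n/(n^2 + mB) and n_C/n_C^2 -> n_C/(n_C^2 + mC) gives
   r(id_B, n^2 + mB) + r(phi, n^2) = r(id_B, n^2) and two similar relations in C,
   ranks can only drop under composition with local maps, and the corollary is
   linear arithmetic.  Ranks are finite because a Steinitz exchange against
   generators of the maximal ideal bounds the size of every free family. *)

Section Ideals.
Variable R : comUnitRingType.
Implicit Types (I J N : R -> Prop) (x y : R).

Lemma is_ideal0 I : is_ideal I -> I 0.
Proof. by case. Qed.

Lemma is_idealD I x y : is_ideal I -> I x -> I y -> I (x + y).
Proof. by case=> _ hD _; apply: hD. Qed.

Lemma is_idealMl I r x : is_ideal I -> I x -> I (r * x).
Proof. by case=> _ _ hM; apply: hM. Qed.

Lemma is_idealMr I r x : is_ideal I -> I x -> I (x * r).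
Proof. by rewrite mulrC; apply: is_idealMl. Qed.

Lemma is_idealN I x : is_ideal I -> I x -> I (- x).
Proof. by rewrite -mulN1r; apply: is_idealMl. Qed.

Lemma is_idealB I x y : is_ideal I -> I x -> I y -> I (x - y).
Proof. by move=> hI hx hy; apply: is_idealD => //; apply: is_idealN. Qed.

Lemma is_ideal_sum I n (F : 'I_n -> R) :
  is_ideal I -> (forall i, I (F i)) -> I (\sum_(i < n) F i).
Proof.
by move=> hI hF; apply: (big_ind I) => // [|*]; [apply: is_ideal0 | apply: is_idealD].
Qed.

Lemma maxIPn x : ~ maxI x <-> x \is a GRing.unit.
Proof. by split=> [hx | hu]; [exact/negPn/negP | rewrite /maxI hu]. Qed.

Lemma maxI1 : ~ maxI (1 : R).
Proof. by apply/maxIPn; apply: unitr1. Qed.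

Lemma zeroI_ideal : is_ideal (@zeroI R).
Proof. by split=> [|x y -> ->|r x ->]; rewrite /zeroI ?addr0 ?mulr0. Qed.

Lemma in_span_ideal n (g : 'I_n -> R) : is_ideal (in_span g).
Proof.
split.
- by exists (fun _ => 0); rewrite big1 // => i _; rewrite mul0r.
- move=> x y [c1 ->] [c2 ->]; exists (fun i => c1 i + c2 i).
  by rewrite -big_split; apply: eq_bigr => i _; rewrite mulrDl.
- move=> r x [c ->]; exists (fun i => r * c i).
  by rewrite mulr_sumr; apply: eq_bigr => i _; rewrite mulrA.
Qed.

Lemma in_span_gen n (g : 'I_n -> R) j : in_span g (g j).
Proof.
exists (fun i => (i == j)%:R).
by rewrite (bigD1 j) //= eqxx mul1r big1 ?addr0 // => i /negPf ->; rewrite mul0r.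
Qed.

Definition span1 y : R -> Prop := fun z => exists r, z = r * y.

Lemma span1_ideal y : is_ideal (span1 y).
Proof.
split.
- by exists 0; rewrite mul0r.
- by move=> x z [r1 ->] [r2 ->]; exists (r1 + r2); rewrite mulrDl.
- by move=> r x [r1 ->]; exists (r * r1); rewrite mulrA.
Qed.

Lemma addI_ideal I J : is_ideal I -> is_ideal J -> is_ideal (addI I J).
Proof.
move=> hI hJ; split.
- by exists 0, 0; rewrite addr0; split; [| split] => //; apply: is_ideal0.
- move=> x y [a [b [ha [hb ->]]]] [a' [b' [ha' [hb' ->]]]].
  exists (a + a'), (b + b').
  by split; [apply: is_idealD | split; [apply: is_idealD | ring]].
- move=> r x [a [b [ha [hb ->]]]]; exists (r * a), (r * b).
  by split; [apply: is_idealMl | split; [apply: is_idealMl | ring]].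
Qed.

Lemma sub_addIl I J x : is_ideal J -> I x -> addI I J x.
Proof. by move=> hJ hx; exists x, 0; rewrite addr0; split; [| split; first apply: is_ideal0]. Qed.

Lemma sub_addIr I J x : is_ideal I -> J x -> addI I J x.
Proof. by move=> hI hx; exists 0, x; rewrite add0r; split; first apply: is_ideal0. Qed.

Lemma addI_zeroIA I J x : addI (addI I (@zeroI R)) J x <-> addI I J x.
Proof.
split=> [[_ [b [[a [z [ha [-> ->]]]] [hb ->]]]] | [a [b [ha [hb ->]]]]].
  by exists a, b; rewrite addr0.
by exists a, b; split=> //; exists a, 0; rewrite addr0.
Qed.

Definition ideal_over_sq N :=
  is_ideal N /\ (forall a b, maxI a -> maxI b -> N (a * b)).

Lemma ideal_over_sq_addI N J :
  ideal_over_sq N -> is_ideal J -> ideal_over_sq (addI N J).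
Proof.
move=> [hN hNM] hJ; split; first exact: addI_ideal.
by move=> a b ha hb; apply: sub_addIl => //; apply: hNM.
Qed.

End Ideals.

Definition local_map (S R : comUnitRingType) (f : S -> R) :=
  forall x, maxI x -> maxI (f x).

Section Concatenation.
Variables (T : Type) (n1 n2 : nat).
Implicit Types (a : 'I_n1 -> T) (b : 'I_n2 -> T).

Definition fcat a b (i : 'I_(n1 + n2)) : T :=
  match split i with inl j => a j | inr j => b j end.

Lemma fcat_lshift a b j : fcat a b (lshift n2 j) = a j.
Proof. by rewrite /fcat -[lshift n2 j]/(unsplit (inl j)) unsplitK. Qed.

Lemma fcat_rshift a b j : fcat a b (rshift n1 j) = b j.
Proof. by rewrite /fcat -[rshift n1 j]/(unsplit (inr j)) unsplitK. Qed.

Lemma fcatP (P : T -> Prop) a b :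
  (forall j, P (a j)) -> (forall j, P (b j)) -> forall i, P (fcat a b i).
Proof. by move=> ha hb i; rewrite /fcat; case: (split i). Qed.

End Concatenation.

Lemma fcat_comp (T U : Type) (f : T -> U) n1 n2 (a1 : 'I_n1 -> T) (a2 : 'I_n2 -> T) i :
  f (fcat a1 a2 i) = fcat (fun j => f (a1 j)) (fun j => f (a2 j)) i.
Proof. by rewrite /fcat; case: (split i). Qed.

Lemma big_fcat (V : nmodType) (T : Type) n1 n2 (F : 'I_(n1 + n2) -> T -> V)
    (a1 : 'I_n1 -> T) (a2 : 'I_n2 -> T) :
  \sum_(i < n1 + n2) F i (fcat a1 a2 i) =
  \sum_(i < n1) F (lshift n2 i) (a1 i) + \sum_(i < n2) F (rshift n1 i) (a2 i).
Proof.
by rewrite big_split_ord; congr (_ + _); apply: eq_bigr => i _;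
  rewrite ?fcat_lshift ?fcat_rshift.
Qed.

Lemma big_fcat2 (V : nmodType) (T1 T2 : Type) (F : T1 -> T2 -> V) n1 n2
    (a1 : 'I_n1 -> T1) (a2 : 'I_n2 -> T1) (b1 : 'I_n1 -> T2) (b2 : 'I_n2 -> T2) :
  \sum_(i < n1 + n2) F (fcat a1 a2 i) (fcat b1 b2 i) =
  \sum_(i < n1) F (a1 i) (b1 i) + \sum_(i < n2) F (a2 i) (b2 i).
Proof.
by rewrite big_split_ord; congr (_ + _); apply: eq_bigr => i _;
  rewrite ?fcat_lshift ?fcat_rshift.
Qed.

Lemma sqI_over_sq (R : comUnitRingType) : is_local R -> ideal_over_sq (sqI (@maxI R)).
Proof.
move=> hR; split; last first.
  by move=> a b ha hb; exists 1%N, (fun _ => a), (fun _ => b); rewrite big_ord1.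
split.
- by exists 0%N, (fun _ => 0), (fun _ => 0); rewrite big_ord0; split=> //; case.
- move=> x y [n1 [a1 [b1 [h1 ->]]]] [n2 [a2 [b2 [h2 ->]]]].
  exists (n1 + n2)%N, (fcat a1 a2), (fcat b1 b2).
  rewrite (big_fcat2 *%R); split=> // i.
  by rewrite /fcat; case: (split i) => j; [apply: h1 | apply: h2].
- move=> r x [n [a [b [hab ->]]]]; exists n, (fun i => r * a i), b; split.
    by move=> i; have [ha hb] := hab i; split=> //; apply: is_idealMl.
  by rewrite mulr_sumr; apply: eq_bigr => i _; rewrite mulrA.
Qed.

Local Notation sq_plus J := (addI (sqI (@maxI _)) J).

Lemma sq_plus_over_sq (R : comUnitRingType) (J : R -> Prop) :
  is_local R -> is_ideal J -> ideal_over_sq (sq_plus J).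
Proof. by move=> hR hJ; apply: ideal_over_sq_addI => //; apply: sqI_over_sq. Qed.

Lemma extI_ideal (A B : comUnitRingType) (f : A -> B) (I : A -> Prop) :
  is_ideal (extI f I).
Proof.
split.
- by exists 0%N, (fun _ => 0), (fun _ => 0); rewrite big_ord0; split=> //; case.
- move=> x y [n1 [a1 [c1 [h1 ->]]]] [n2 [a2 [c2 [h2 ->]]]].
  exists (n1 + n2)%N, (fcat a1 a2), (fcat c1 c2); split; first exact: fcatP.
  by rewrite (big_fcat2 (fun a c => c * f a)).
- move=> r x [n [a [c [ha ->]]]]; exists n, a, (fun i => r * c i); split=> //.
  by rewrite mulr_sumr; apply: eq_bigr => i _; rewrite mulrA.
Qed.

Lemma extI_gen (A B : comUnitRingType) (f : A -> B) (I : A -> Prop) a :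
  I a -> extI f I (f a).
Proof. by exists 1%N, (fun _ => a), (fun _ => 1); rewrite big_ord1 mul1r. Qed.

Section RingMorphismImages.
Variables (B C : comUnitRingType) (g : {rmorphism B -> C}).

Lemma sqI_map z : local_hom g -> sqI (@maxI B) z -> sqI (@maxI C) (g z).
Proof.
move=> hg [n [a [b [hab ->]]]]; exists n, (fun i => g (a i)), (fun i => g (b i)).
split; first by move=> i; have [ha hb] := hab i; split; apply: hg.
by rewrite rmorph_sum; apply: eq_bigr => i _; rewrite rmorphM.
Qed.

Lemma sq_plus_map (J : B -> Prop) (J' : C -> Prop) z :
  local_hom g -> (forall x, J x -> J' (g x)) -> sq_plus J z -> sq_plus J' (g z).
Proof.
move=> hg hJ [a [b [ha [hb ->]]]]; exists (g a), (g b).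
by split; [apply: sqI_map | split; [apply: hJ | rewrite rmorphD]].
Qed.

Lemma sq_plus_zeroI_map z :
  local_hom g -> sq_plus (@zeroI B) z -> sq_plus (@zeroI C) (g z).
Proof. by move=> hg; apply: sq_plus_map => // x ->; rewrite rmorph0. Qed.

Lemma extI_map (A : comUnitRingType) (f : A -> B) (I : A -> Prop) z :
  extI f I z -> extI (fun a => g (f a)) I (g z).
Proof.
move=> [n [a [c [ha ->]]]]; exists n, a, (fun i => g (c i)); split=> //.
by rewrite rmorph_sum; apply: eq_bigr => i _; rewrite rmorphM.
Qed.

End RingMorphismImages.

Section FreeModulo.
Variable R : comUnitRingType.
Hypothesis R_local : is_local R.
Implicit Types (N M : R -> Prop).

(* The classes of [w] modulo [N] are linearly independent over the residue field. *)
Definition free_mod N s (w : 'I_s -> R) :=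
  forall b : 'I_s -> R, N (\sum_(i < s) b i * w i) -> forall i, maxI (b i).

Lemma free_modS N M s (w : 'I_s -> R) :
  (forall x, M x -> N x) -> free_mod N w -> free_mod M w.
Proof. by move=> hMN hw b hb; apply: hw; apply: hMN. Qed.

Lemma eq_free_mod N s (w w' : 'I_s -> R) : w =1 w' -> free_mod N w -> free_mod N w'.
Proof. by move=> e hw b; under eq_bigr => i _ do rewrite -e; apply: hw. Qed.

Lemma free_modPn N s (w : 'I_s -> R) :
  ~ free_mod N w ->
  exists2 b : 'I_s -> R, N (\sum_(i < s) b i * w i) & exists i, ~ maxI (b i).
Proof.
move=> hw; apply: NNPP => hn; apply: hw => b hb i; apply: NNPP => hi.
by apply: hn; exists b => //; exists i.
Qed.

(* If a relation modulo [N + (y)] has a unit coefficient, then so has [y] in it;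
   subtracting a multiple of it from a relation among the other members yields a
   relation modulo [N]. *)
Lemma free_mod_add_span1 N y s (w : 'I_s -> R) :
  ideal_over_sq N -> maxI y -> free_mod N w ->
  exists t (sel : 'I_t -> 'I_s),
    (s <= t.+1)%N /\ free_mod (addI N (span1 y)) (fun j => w (sel j)).
Proof.
case: s w => [|s] w [hN hNM] hy hw; first by exists 0%N, id; split=> // b _ [].
have [hw'|/free_modPn [b [nu' [_ [hnu' [[r' ->] hb]]]] [i0 hi0]]] :=
  classic (free_mod (addI N (span1 y)) w); first by exists s.+1, id.
exists s, (lift i0); split=> // a [nu [_ [hnu [[r ->] ha]]]].
have ur' : r' \is a GRing.unit.
  apply/maxIPn => hr'; apply: hi0; apply: hw; rewrite hb.
  by apply: is_idealD => //; apply: hNM.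
pose k := r / r'.
pose c i := (if unlift i0 i is Some j then a j else 0) - k * b i.
have hc : N (\sum_(i < s.+1) c i * w i).
  have -> : \sum_(i < s.+1) c i * w i = nu - k * nu'.
    under eq_bigr => i _ do rewrite mulrBl -mulrA.
    rewrite sumrB (bigD1_ord i0) //= unlift_none mul0r add0r.
    under eq_bigr => j _ do rewrite liftK.
    by rewrite ha -mulr_sumr hb mulrDr mulrA /k divrK //; ring.
  by apply: is_idealB => //; apply: is_idealMl.
have hk : maxI k.
  have := hw c hc i0; rewrite /c unlift_none sub0r => hkb.
  have -> : k = - (- (k * b i0)) / b i0 by rewrite opprK mulrK //; apply/maxIPn.
  by apply: is_idealMr => //; apply: is_idealN.
move=> j; have := hw c hc (lift i0 j); rewrite /c liftK => hc_j.
rewrite -(subrK (k * b (lift i0 j)) (a j)).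
by apply: is_idealD => //; apply: is_idealMr.
Qed.

Lemma free_mod_add_span N d (y : 'I_d -> R) s (w : 'I_s -> R) :
  ideal_over_sq N -> (forall j, maxI (y j)) -> free_mod N w ->
  exists t (sel : 'I_t -> 'I_s),
    (s <= t + d)%N /\ free_mod (addI N (in_span y)) (fun j => w (sel j)).
Proof.
elim: d y N s w => [|d IH] y N s w hN hy hw.
  exists s, id; split; first by rewrite addn0.
  by apply: free_modS hw => _ [a [_ [ha [[c ->] ->]]]]; rewrite big_ord0 addr0.
have [t1 [sel1 [hs1 hw1]]] := free_mod_add_span1 hN (hy ord0) hw.
have hN1 : ideal_over_sq (addI N (span1 (y ord0))).
  exact/ideal_over_sq_addI/span1_ideal.
have [t2 [sel2 [hs2 hw2]]] :=
  IH (fun j => y (lift ord0 j)) _ _ _ hN1 (fun j => hy _) hw1.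
exists t2, (fun j => sel1 (sel2 j)); split; first by lia.
apply: free_modS hw2 => _ [a [_ [ha [[c ->] ->]]]].
rewrite big_ord_recl addrA.
exists (a + c ord0 * y ord0), (\sum_(i < d) c (lift ord0 i) * y (lift ord0 i)).
split; last by split; first by exists (fun i => c (lift ord0 i)).
by exists a, (c ord0 * y ord0); split=> //; split=> //; exists (c ord0).
Qed.

Lemma free_mod_extend N s (w : 'I_s -> R) v :
  ideal_over_sq N -> maxI v -> free_mod N w -> ~ addI N (in_span w) v ->
  free_mod N (fcat w (fun _ : 'I_1 => v)).
Proof.
move=> [hN hNM] hv hw hnv b.
rewrite (big_fcat (fun i x => b i * x)) big_ord1.
set bv := b (rshift s ord0); set S := \sum_(i < s) _ => hb.
have [hbv|/maxIPn ubv] := classic (maxI bv); last first.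
  pose c i := - (bv^-1 * b (lshift 1 i)).
  case: hnv; exists (bv^-1 * (S + bv * v)), (\sum_(i < s) c i * w i).
  split; first exact: is_idealMl.
  split; first by exists c.
  rewrite mulrDr mulrA mulVr // mul1r addrAC mulr_sumr -big_split /=.
  by rewrite big1 ?add0r // => i _; rewrite mulNr mulrA addrN.
have hS : N S by rewrite -(addrK (bv * v) S); apply: is_idealB => //; apply: hNM.
move=> i; rewrite -(splitK i); case: (split i) => j /=; first exact: hw hS j.
by rewrite ord1.
Qed.

(* If [w2] lies in [M], a relation modulo [N] between [w1] and [w2] is first a
   relation modulo [M] for [w1]; its coefficients then are non-units, so the [w1]
   part lies in [N] as [N] contains the products of two non-units. *)
Lemma free_mod_fcat N M s1 s2 (w1 : 'I_s1 -> R) (w2 : 'I_s2 -> R) :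
  ideal_over_sq N -> is_ideal M -> (forall x, N x -> M x) ->
  (forall i, maxI (w1 i)) -> (forall j, M (w2 j)) ->
  free_mod M w1 -> free_mod N w2 -> free_mod N (fcat w1 w2).
Proof.
move=> [hN hNM] hM hNsubM hw1m hw2M hw1 hw2 b.
rewrite (big_fcat (fun i x => b i * x)).
set S1 := \sum_(i < s1) _; set S2 := \sum_(i < s2) _ => hb.
have hb1 : forall i, maxI (b (lshift s2 i)).
  apply: hw1; rewrite -/S1 -(addrK S2 S1); apply: is_idealB => //; first exact: hNsubM.
  by apply: is_ideal_sum => // j; apply: is_idealMl.
have hS1 : N S1 by rewrite /S1; apply: is_ideal_sum => // i; apply: hNM.
have hb2 : forall j, maxI (b (rshift s1 j)).
  by apply: hw2; rewrite -/S2 -(addrK S1 S2) (addrC S2 S1); apply: is_idealB.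
by move=> i; rewrite -(splitK i); case: (split i) => j /=.
Qed.

End FreeModulo.

(* Exchanging the [k] generators of the maximal ideal into a free family leaves a
   family free modulo an ideal containing the maximal ideal, hence an empty one. *)
Lemma free_mod_bounded (R : comUnitRingType) : noeth_local R ->
  exists k, forall (N : R -> Prop) s (w : 'I_s -> R),
    ideal_over_sq N -> (forall i, maxI (w i)) -> free_mod N w -> (s <= k)%N.
Proof.
move=> [hnoeth hloc]; have [k [g hg]] := hnoeth _ hloc.
exists k => N s w hN hw hfree.
have hg_max j : maxI (g j) by apply/hg; apply: in_span_gen.
have [[|t] [sel [hs hfree']]] := free_mod_add_span hloc hN hg_max hfree; first by lia.
exfalso; apply: (@maxI1 R (hfree' (fun i => (i == ord0)%:R) _ ord0)).
rewrite (bigD1 ord0) //= mul1r big1 ?addr0 => [|i /negPf ->]; last by rewrite mul0r.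
by apply: sub_addIr; [case: hN | apply/hg/hw].
Qed.

Lemma maxdimP (P : nat -> Prop) k : P 0%N -> (forall e, P e -> (e <= k)%N) ->
  P (maxdim P) /\ forall e, P e -> (e <= maxdim P)%N.
Proof.
move=> hP0 hk.
suff hmax : exists d, P d /\ forall e, P e -> (e <= d)%N.
  exact: (epsilon_spec (inhabits 0%N) _ hmax).
elim: k hk => [|k IH] hk; first by exists 0%N; split=> // e /hk.
have [hPk|hPk] := classic (P k.+1); first by exists k.+1.
apply: IH => e he; rewrite -ltnS ltn_neqAle hk // andbT.
by apply/eqP => ek; rewrite ek in he.
Qed.

Section ImageRank.
Variables (S R : comUnitRingType).
Implicit Types (f : S -> R) (N : R -> Prop).

Definition free_image f N s :=
  exists x : 'I_s -> S, (forall i, maxI (x i)) /\ free_mod N (fun i => f (x i)).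

Definition image_rank f N := maxdim (free_image f N).

Lemma image_rankP f N : noeth_local R -> ideal_over_sq N -> local_map f ->
  free_image f N (image_rank f N) /\
  forall e, free_image f N e -> (e <= image_rank f N)%N.
Proof.
move=> hR hN hf; have [k hk] := free_mod_bounded hR.
apply: (maxdimP (k := k)); first by exists (fun _ => 0); split=> [[]|b _ []].
by move=> e [x [hx hfree]]; apply: hk hfree => // i; apply: hf.
Qed.

End ImageRank.

Lemma imdimE (A B : comUnitRingType) (f : A -> B) I J :
  imdim f I J = image_rank f (sq_plus J).
Proof. by []. Qed.

Lemma cotdimE (A : comUnitRingType) (I : A -> Prop) :
  cotdim I = image_rank idfun (sq_plus I).
Proof. by []. Qed.

Lemma image_rank_comp_le (S B C : comUnitRingType) (h : S -> C) (f : S -> B)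
    (g : {rmorphism B -> C}) (NB : B -> Prop) (NC : C -> Prop) :
  noeth_local B -> noeth_local C -> ideal_over_sq NB -> ideal_over_sq NC ->
  local_map f -> local_hom g -> (forall x, h x = g (f x)) ->
  (forall z, NB z -> NC (g z)) ->
  (image_rank h NC <= image_rank f NB)%N.
Proof.
move=> hB hC hNB hNC hf hg hh hgN.
have h_local : local_map h by move=> x hx; rewrite hh; apply/hg/hf.
have [[x [hx hfree]] _] := image_rankP hC hNC h_local.
apply: (image_rankP hB hNB hf).2; exists x; split=> // b hb i.
have := hfree (fun i => g (b i)); under eq_bigr => j _ do rewrite hh -rmorphM.
rewrite -rmorph_sum => /(_ (hgN _ hb) i).
by apply: contra; apply: rmorph_unit.
Qed.

Lemma max_free_image_span (S R : comUnitRingType) (h : S -> R) (N : R -> Prop)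
    d (x : 'I_d -> S) :
  ideal_over_sq N -> local_map h ->
  (forall i, maxI (x i)) -> free_mod N (fun i => h (x i)) ->
  (forall e, free_image h N e -> (e <= d)%N) ->
  forall a, maxI a -> addI N (in_span (fun i => h (x i))) (h a).
Proof.
move=> hN h_local hx hfree hmax a ha; apply: NNPP => hna.
suff : (d + 1 <= d)%N by rewrite addn1 ltnn.
apply: hmax; exists (fcat x (fun _ => a)); split; first exact: fcatP.
apply: eq_free_mod (fun i => esym (fcat_comp h x _ i)) _.
exact: free_mod_extend hN (h_local _ ha) hfree hna.
Qed.

(* Rank-nullity for [maxI R / N -> maxI R / N'], restricted to the span of the
   image of [h'], whose kernel is the span of the image of [h]. *)
Section ImageRankAdditivity.
Variables (S S' R : comUnitRingType) (h' : S' -> R) (sel : S -> S') (h : S -> R).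
Variables (N N' : R -> Prop).
Hypotheses (R_noeth_local : noeth_local R) (N_over_sq : ideal_over_sq N).
Hypotheses (h'_local : local_map h') (sel_local : local_map sel).
Hypothesis h_factors : forall x, h x = h' (sel x).
Hypothesis N'E : forall z, addI N (extI h (@maxI S)) z <-> N' z.

Let h_local : local_map h.
Proof. by move=> x hx; rewrite h_factors; apply/h'_local/sel_local. Qed.

Let N'_ideal : is_ideal N'.
Proof.
have [h0 hD hM] := addI_ideal N_over_sq.1 (extI_ideal h (@maxI S)).
by split=> [|x y /N'E hx /N'E hy|r x /N'E hx]; apply/N'E; [| apply: hD | apply: hM].
Qed.

Let N'_over_sq : ideal_over_sq N'.
Proof.
split=> [|a b ha hb]; first exact: N'_ideal.
by apply/N'E; apply: sub_addIl; [apply: extI_ideal | apply: N_over_sq.2].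
Qed.

Lemma image_rank_add_le : (image_rank h' N' + image_rank h N <= image_rank h' N)%N.
Proof.
have [[x' [hx' hfree']] _] := image_rankP R_noeth_local N'_over_sq h'_local.
have [[x [hx hfree]] _] := image_rankP R_noeth_local N_over_sq h_local.
apply: (image_rankP R_noeth_local N_over_sq h'_local).2.
exists (fcat x' (fun j => sel (x j))).
split; first by apply: fcatP => // j; apply: sel_local.
apply: eq_free_mod (fun i => esym (fcat_comp h' x' _ i)) _.
apply: (free_mod_fcat N_over_sq N'_ideal _ _ _ hfree').
- by move=> z hz; apply/N'E; apply: sub_addIl => //; apply: extI_ideal.
- by move=> i; apply: h'_local.
- move=> j; apply/N'E; rewrite -h_factors.
  by apply: sub_addIr; [case: N_over_sq | apply: extI_gen].
- by apply: eq_free_mod hfree => j; apply: h_factors.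
Qed.

(* A maximal free family [h \o x] spans [N'] modulo [N]; exchanging its members into
   a maximal free family [h' \o y] leaves a family free modulo [N']. *)
Lemma image_rank_add_ge : (image_rank h' N <= image_rank h' N' + image_rank h N)%N.
Proof.
have [[x [hx hfree]] hmax] := image_rankP R_noeth_local N_over_sq h_local.
have [[y [hy hfreey]] _] := image_rankP R_noeth_local N_over_sq h'_local.
have hspan := max_free_image_span N_over_sq h_local hx hfree hmax.
have [t [sel_y [hs hfree_t]]] :=
  free_mod_add_span R_noeth_local.2 N_over_sq (fun j => h_local (hx j)) hfreey.
suff : (t <= image_rank h' N')%N by lia.
apply: (image_rankP R_noeth_local N'_over_sq h'_local).2.
exists (fun j => y (sel_y j)); split=> //.
apply: free_modS hfree_t => z /N'E [a [_ [ha [[n [c [e [hc ->]]]] ->]]]].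
have hM := addI_ideal N_over_sq.1 (in_span_ideal (fun i => h (x i))).
apply: is_idealD => //; first exact: sub_addIl (in_span_ideal _) ha.
by apply: is_ideal_sum => // i; apply: is_idealMl => //; apply: hspan.
Qed.

Lemma image_rank_addE : (image_rank h' N' + image_rank h N)%N = image_rank h' N.
Proof. by apply/eqP; rewrite eqn_leq image_rank_add_le image_rank_add_ge. Qed.

End ImageRankAdditivity.

Unset Implicit Arguments. Set Strict Implicit.

Theorem corollary3p9 (A B C : comUnitRingType)
  (phi : {rmorphism A -> B}) (psi : {rmorphism B -> C}) :
  noeth_local A -> noeth_local B -> noeth_local C ->
  local_hom phi -> local_hom psi ->
  let mB := extI phi (@maxI A) in
  let mC := extI (fun a => psi (phi a)) (@maxI A) in
  [/\ (rd (fun a => psi (phi a)))%:Z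
        = (rd phi)%:Z + (rd psi)%:Z - (rd_gen psi mB mC)%:Z,
      (rd (fun a => psi (phi a)))%:Z
        = (rd phi)%:Z + ((rd_gen (@idfun B) (@zeroI B) mB)%:Z
                          - (rd_gen (@idfun C) (@zeroI C) mC)%:Z),
      (rd phi <= rd (fun a => psi (phi a)))%N &
      (rd (fun a => psi (phi a)) <= rd phi + rd psi)%N].
Proof.
move=> hA hB hC hphi hpsi mB mC.
rewrite /rd /rd_gen !imdimE !cotdimE /mB /mC.
have oA0 := sq_plus_over_sq hA.2 (zeroI_ideal A).
have oB0 := sq_plus_over_sq hB.2 (zeroI_ideal B).
have oC0 := sq_plus_over_sq hC.2 (zeroI_ideal C).
have oBm := sq_plus_over_sq hB.2 (extI_ideal phi (@maxI A)).
have oCm := sq_plus_over_sq hC.2 (extI_ideal (fun a => psi (phi a)) (@maxI A)).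
have id_local (R : comUnitRingType) : local_map (@idfun R) by [].
have psiphi_local : local_map (fun a => psi (phi a)) by move=> x /hphi /hpsi.
have phi0 := sq_plus_zeroI_map hphi; have psi0 := sq_plus_zeroI_map hpsi.
have psi_m z : sq_plus mB z -> sq_plus mC (psi z).
  by apply: sq_plus_map => // y; apply: extI_map.
have le_phi := image_rank_comp_le (h := phi)
  hA hB oA0 oB0 (id_local A) hphi (fun _ => erefl) phi0.
have le_psi := image_rank_comp_le (h := psi)
  hB hC oB0 oC0 (id_local B) hpsi (fun _ => erefl) psi0.
have le_psiphi := image_rank_comp_le (h := fun a => psi (phi a))
  hB hC oB0 oC0 hphi hpsi (fun _ => erefl) psi0.
have le_psi_m := image_rank_comp_le (h := psi)
  hB hC oBm oCm (id_local B) hpsi (fun _ => erefl) psi_m.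
have eqB := image_rank_addE (h := phi)
  hB oB0 (id_local B) hphi (fun _ => erefl) (addI_zeroIA _ _).
have eqC := image_rank_addE (h := fun a => psi (phi a))
  hC oC0 hpsi hphi (fun _ => erefl) (addI_zeroIA _ _).
have eqC' := image_rank_addE (h := fun a => psi (phi a))
  hC oC0 (id_local C) psiphi_local (fun _ => erefl) (addI_zeroIA _ _).
split; lia.
Qed.
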